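(* Let $\mathcal C$ be a Clifford circuit with $m$ measurements and let $\mathcal C'$ be the circuit obtained from $\mathcal C$ by replacing the measured operator $S_j$ by $-S_j$ for every $j$ such that, when the Outcome-Code Algorithm is run on $\mathcal C$, the measurement of $S_j$ falls in case (a) with $-S_j\in\langle\mathcal S\rangle$ (i.e. $\epsilon=-1$). Then the outcome code $\mathcal O(\mathcal C')$ of $\mathcal C'$ is a linear subspace of $\mathbb Z_2^m$.
   Context: A Clifford circuit $\mathcal C$ on $n$ qubits is a finite sequence $(C_1,\dots,C_s)$ of operations, each either a unitary Clifford gate or the measurement of a Hermitian $n$-qubit Pauli operator. Each $C_i$ has a level in $\{1,2,\dots\}$; operations of equal level have disjoint supports and levels are nondecreasing along the sequence. The circuit has $m$ measurements; in circuit order the $j$-th measures $S_j$. An execution produces $o\in\mathbb Z_2^m$ with $o_j=0$ for eigenvalue $+1$ and $o_j=1$ for eigenvalue $-1$. The outcome code $\mathcal O(\mathcal C)$ is the set of outcome bit-strings occurring with nonzero probability for some input state. Outcome-Code Algorithm. Maintain a list $\mathcal S$ of pairs $(T,K_T)$ ($T$ a signed Hermitian $n$-qubit Pauli, $K_T\subseteq\{1,\dots,m\}$), initially empty. Process $C_1,\dots,C_s$ in order. If $C_i$ is a unitary $U$, replace each $T$ by $UTU^{-1}$. If $C_i$ measures $S_j$: (a) if $S_j$ or $-S_j$ lies in the group $\langle\mathcal S\rangle$ generated by the $T$'s, write $\epsilon S_j=\prod_{T\in\mathcal T}T$ with $\epsilon\in\{\pm1\}$, let $K_j$ be the symmetric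 difference of the $K_T$, $T\in\mathcal T$, and record the affine check $o_j+\sum_{k\in K_j}o_k=0$ if $\epsilon=+1$, $=1$ if $\epsilon=-1$; (b) otherwise, if some $T\in\mathcal S$ anticommutes with $S_j$, replace every other anticommuting $T'$ by $(TT',K_T\triangle K_{T'})$ and remove $(T,K_T)$; then add $(S_j,\{j\})$. *)

(* Complex numbers are modelled by algC (algebraic complex
   numbers), which contains all matrix entries of Pauli and Clifford operators
   and of the relevant states. *)
From HB Require Import structures.
From mathcomp Require Import all_boot all_order all_algebra algC.
From Stdlib Require Import ClassicalEpsilon.
Set Implicit Arguments.
Unset Strict Implicit.
Unset Printing Implicit Defensive.
Import Order.TTheory GRing.Theory Num.Theory.
Local Open Scope ring_scope.

Definition decP (P : Prop) : bool :=
  if excluded_middle_informative P then true else false.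

(* computational basis index i : 'I_(2^n); qubit k carries bit k of i *)
Definition opn (n : nat) := 'M[algC]_(2 ^ n).
Definition bitk (k i : nat) : bool := odd (i %/ 2 ^ k).

Inductive pauli1 := PI | PX | PY | PZ.

Definition sigma (p : pauli1) (a b : bool) : algC :=
  match p with
  | PI => if a == b then 1 else 0
  | PX => if a == b then 0 else 1
  | PY => if a == b then 0 else if a then 'i else - 'i
  | PZ => if a == b then (if a then -1 else 1) else 0
  end.

Definition tensP (n : nat) (p : 'I_n -> pauli1) : opn n :=
  \matrix_(i, j) \prod_(k < n) sigma (p k) (bitk k i) (bitk k j).

Definition adj (n : nat) (M : opn n) : opn n := (map_mx Num.conj M)^T.

Definition is_pauli (n : nat) (M : opn n) : Prop :=
  exists (k : 'I_4) (p : 'I_n -> pauli1), M = ('i ^+ k) *: tensP p.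

Definition hermitian (n : nat) (M : opn n) : Prop := adj M = M.

Definition is_hpauli (n : nat) (M : opn n) : Prop := is_pauli M /\ hermitian M.

Definition unitary (n : nat) (U : opn n) : Prop := U *m adj U = 1%:M.

Definition clifford (n : nat) (U : opn n) : Prop :=
  unitary U /\ forall P : opn n, is_pauli P -> is_pauli (U *m P *m invmx U).

Inductive cop (n : nat) :=
| Gate of opn n
| Meas of opn n.
Arguments Gate {n}.
Arguments Meas {n}.

Definition circuit (n : nat) := seq (cop n).

Definition valid_op (n : nat) (c : cop n) : Prop :=
  match c with Gate U => clifford U | Meas Sm => is_hpauli Sm end.

Definition valid_circuit (n : nat) (C : circuit n) : Prop :=
  foldr (fun c P => valid_op c /\ P) True C.

Definition is_meas (n : nat) (c : cop n) : bool :=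
  if c is Meas _ then true else false.

Definition num_meas (n : nat) (C : circuit n) : nat := count (@is_meas n) C.

Definition proj (n : nat) (b : bool) (Sm : opn n) : opn n :=
  (2%:R)^-1 *: (1%:M + (if b then - Sm else Sm)).

(* Unnormalised post-measurement state (Born rule): the circuit is run on psi,
   the j-th measurement (0-based counter j) yielding outcome o j. *)
Fixpoint run (n : nat) (C : circuit n) (j : nat) (o : nat -> bool)
    (psi : 'cV[algC]_(2 ^ n)) : 'cV[algC]_(2 ^ n) :=
  match C with
  | [::] => psi
  | Gate U :: C' => run C' j o (U *m psi)
  | Meas Sm :: C' => run C' j.+1 o (proj (o j) Sm *m psi)
  end.

Definition sqnorm (N : nat) (v : 'cV[algC]_N) : algC := \sum_i `|v i 0| ^+ 2.

(* probability of the outcome string o (o j = true means eigenvalue -1) *)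
Definition prob (n : nat) (C : circuit n) (o : nat -> bool)
    (psi : 'cV[algC]_(2 ^ n)) : algC := sqnorm (run C 0 o psi).

Definition outcome_fun (m : nat) (o : 'rV['F_2]_m) (j : nat) : bool :=
  match ltnP j m with
  | LtnNotGeq h => o 0 (Ordinal h) == 1
  | _ => false
  end.

Definition outcome_code (n : nat) (C : circuit n) : pred 'rV['F_2]_(num_meas C) :=
  fun o => decP (exists psi : 'cV[algC]_(2 ^ n),
                   sqnorm psi = 1 /\ prob C (outcome_fun o) psi != 0).

Arguments outcome_code {n} C _.

Definition in_group (n : nat) (L : seq (opn n)) (X : opn n) : Prop :=
  exists s : seq (opn n), all (mem L) s /\ X = foldr (@mulmx _ _ _ _) 1%:M s.

Definition anticomm (n : nat) (A B : opn n) : bool := A *m B == - (B *m A).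

Definition update_b (n : nat) (L : seq (opn n)) (Sm : opn n) : seq (opn n) :=
  let i := find (fun T => anticomm T Sm) L in
  if (i < size L)%N then
    let T := nth 0 L i in
    [seq (if anticomm T' Sm then T *m T' else T') | T' <- take i L ++ drop i.+1 L]
      ++ [:: Sm]
  else rcons L Sm.

(* returns, for each measurement in order, whether it falls in case (a)
   with epsilon = -1, i.e. -S_j in <S> *)
Fixpoint oca_flags (n : nat) (L : seq (opn n)) (C : circuit n) : seq bool :=
  match C with
  | [::] => [::]
  | Gate U :: C' => oca_flags [seq U *m T *m invmx U | T <- L] C'
  | Meas Sm :: C' =>
      if decP (in_group L Sm \/ in_group L (- Sm)) then
        decP (in_group L (- Sm)) :: oca_flags L C'
      else false :: oca_flags (update_b L Sm) C'
  end.

Fixpoint flip_meas (n : nat) (fl : seq bool) (C : circuit n) : circuit n :=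
  match C with
  | [::] => [::]
  | Gate U :: C' => Gate U :: flip_meas fl C'
  | Meas Sm :: C' =>
      Meas (if head false fl then - Sm else Sm) :: flip_meas (behead fl) C'
  end.

Definition flipped_circuit (n : nat) (C : circuit n) : circuit n :=
  flip_meas (oca_flags [::] C) C.

(* Run the circuit on the maximally mixed state and follow, for every outcome
   string o, the unnormalised state X_o = K_o K_o^* (K_o the product of the gates
   and projectors met so far) together with the list of generators kept by the
   Outcome-Code Algorithm.  Invariant: the strings o with K_o <> 0 form an
   F_2-linear set G; for o in G every generator T satisfies T X_o = (-1)^(f_T o) X_o
   with f_T linear, tr X_o <> 0, and tr (Q X_o) = 0 for every Pauli Q not
   proportional to an element of the generated group.  A case (a) measurement of
   S cuts G down by the linear condition o_j = f_S(o); this is where flipping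
   S to -S matters, since otherwise the condition would be affine.  A case (b)
   measurement keeps G, since S is traceless against X_o.  Hence the outcome
   code is G, read in Z_2^m. *)

From Pilot Require Import Defs.
From HB Require Import structures.
From mathcomp Require Import all_boot all_order all_algebra algC.
From Stdlib Require Import FunctionalExtensionality Classical.
Set Implicit Arguments.
Unset Strict Implicit.
Unset Printing Implicit Defensive.
Import Order.TTheory GRing.Theory Num.Theory.
Local Open Scope ring_scope.

(** * Pauli operators *)

(* Multiplication table of the single-qubit Paulis:
   [sigma a * sigma b = 'i ^+ pphase a b * sigma (pmul a b)] ([sigma_mul]). *)
Definition pmul (a b : pauli1) : pauli1 :=
  match a, b with
  | PI, x | x, PI => x
  | PX, PX | PY, PY | PZ, PZ => PI
  | PX, PY | PY, PX => PZ
  | PY, PZ | PZ, PY => PX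
  | PZ, PX | PX, PZ => PY
  end.

Definition pphase (a b : pauli1) : nat :=
  match a, b with
  | PX, PY | PY, PZ | PZ, PX => 1
  | PY, PX | PZ, PY | PX, PZ => 3
  | _, _ => 0
  end.

Definition panti (a b : pauli1) : bool :=
  match a, b with
  | PI, _ | _, PI | PX, PX | PY, PY | PZ, PZ => false
  | _, _ => true
  end.

Definition signb (b : bool) : algC := if b then -1 else 1.

Lemma expCi3 : ('i : algC) ^+ 3 = - 'i.
Proof. by rewrite exprS sqrCi mulrN1. Qed.

Lemma sigma_mul a b x y :
  \sum_(c : bool) sigma a x c * sigma b c y = 'i ^+ pphase a b * sigma (pmul a b) x y.
Proof.
rewrite big_bool; case: a; case: b; case: x; case: y;
  rewrite /= ?expCi3 ?expr1 ?expr0;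
  rewrite ?(mul0r, mulr0, mul1r, mulr1, add0r, addr0, mulrN, mulNr,
     opprK, mulN1r, mulrN1) //;
  rewrite -?expr2 ?(@sqrCi algC) ?opprK //.
Qed.

Lemma pmulC a b : pmul b a = pmul a b.
Proof. by case: a; case: b. Qed.

Lemma pmulxx a : pmul a a = PI.
Proof. by case: a. Qed.

Lemma pphasexx a : pphase a a = 0%N.
Proof. by case: a. Qed.

Lemma pphaseC a b : ('i : algC) ^+ pphase b a = signb (panti a b) * 'i ^+ pphase a b.
Proof. by case: a; case: b; rewrite /= ?expCi3 ?expr1 ?expr0 ?mul1r ?mulN1r ?opprK. Qed.

Lemma conj_sigma a x y : (sigma a x y)^* = sigma a y x.
Proof.
have conjNi : (- 'i : algC)^* = 'i by rewrite -conjCi conjCK.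
by case: a; case: x; case: y; rewrite /= ?conjNi ?conjCi ?rmorphN ?rmorph1 ?rmorph0.
Qed.

Lemma bitk0 m : bitk 0 m = odd m.
Proof. by rewrite /bitk expn0 divn1. Qed.

Lemma bitkS k m : bitk k.+1 m = bitk k m./2.
Proof. by rewrite /bitk expnS divnMA divn2. Qed.

Lemma big_nat_double (f : nat -> algC) N :
  \sum_(0 <= l < N.*2) f l = \sum_(0 <= l < N) (f l.*2 + f l.*2.+1).
Proof.
elim: N => [|N IH]; first by rewrite !big_geq.
by rewrite doubleS !big_nat_recr //= IH addrA.
Qed.

Lemma sum_prod_bitk n (F : 'I_n -> bool -> algC) :
  \sum_(l < 2 ^ n) \prod_(k < n) F k (bitk k l) = \prod_(k < n) (F k false + F k true).
Proof.
elim: n F => [|n IH] F; first by rewrite big_ord1 !big_ord0.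
rewrite big_ord_recl -(IH (fun k => F (lift ord0 k))) mulr_sumr.
rewrite -(big_mkord xpredT (fun l => \prod_(k < n.+1) F k (bitk k l))).
rewrite -(big_mkord xpredT
  (fun l => (F ord0 false + F ord0 true) * \prod_(k < n) F (lift ord0 k) (bitk k l))).
rewrite expnS mul2n big_nat_double; apply: eq_bigr => l _.
rewrite !big_ord_recl !bitk0 odd_double /= odd_double /= mulrDl.
congr (_ * _ + _ * _); apply: eq_bigr => k _; rewrite bitkS; first by rewrite doubleK.
by rewrite -[l.*2.+1]/(true + l.*2)%N half_bit_double.
Qed.

Lemma bitk_inj n (i j : nat) : (i < 2 ^ n)%N -> (j < 2 ^ n)%N ->
  (forall k, (k < n)%N -> bitk k i = bitk k j) -> i = j.
Proof.
elim: n i j => [|n IH] i j; first by rewrite expn0 !ltnS !leqn0 => /eqP -> /eqP ->.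
rewrite expnS mul2n => hi hj hb.
rewrite -(odd_double_half i) -(odd_double_half j).
have h0 := hb 0%N isT; rewrite !bitk0 in h0; rewrite h0.
congr (_ + _.*2)%N; apply: IH; rewrite ?ltn_half_double //.
by move=> k hk; rewrite -!bitkS; apply: hb.
Qed.

Section Tensor.

Variable n : nat.
Implicit Types p q : 'I_n -> pauli1.

Lemma tensP_mul p q :
  tensP p *m tensP q =
  (\prod_(k < n) 'i ^+ pphase (p k) (q k)) *: tensP (fun k => pmul (p k) (q k)).
Proof.
apply/matrixP => i j; rewrite !mxE.
under eq_bigr => l _ do rewrite !mxE -big_split /=.
rewrite (sum_prod_bitk (fun k c => sigma (p k) (bitk k i) c * sigma (q k) c (bitk k j))).
by rewrite -big_split /=; apply: eq_bigr => k _; rewrite -sigma_mul big_bool addrC.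
Qed.

Lemma tensP_adj p : adj (tensP p) = tensP p.
Proof.
apply/matrixP => i j; rewrite /adj !mxE rmorph_prod.
by apply: eq_bigr => k _; apply: conj_sigma.
Qed.

Lemma tensP1 : tensP (fun _ : 'I_n => PI) = 1%:M.
Proof.
apply/matrixP => i j; rewrite !mxE /=.
have [->|hij] := eqVneq i j; first by apply: big1 => k _; rewrite eqxx.
have /existsP [k hk] : [exists k : 'I_n, bitk k i != bitk k j].
  apply: contraNT hij; rewrite negb_exists => /forallP hall.
  apply/eqP/val_inj/(@bitk_inj n) => [||k hk]; rewrite ?ltn_ord //.
  by apply/eqP/negPn; apply: (hall (Ordinal hk)).
by rewrite (bigD1 k) //= (negbTE hk) mul0r.
Qed.

Lemma tensP_sq p : tensP p *m tensP p = 1%:M.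
Proof.
rewrite tensP_mul big1 => [|k _]; last by rewrite pphasexx.
by rewrite scale1r -tensP1; congr tensP;
 apply: functional_extensionality => k; rewrite pmulxx.
Qed.

Lemma mxtrace_tensP p :
  \tr (tensP p) = \prod_(k < n) (sigma (p k) false false + sigma (p k) true true).
Proof.
rewrite /mxtrace; under eq_bigr => l _ do rewrite mxE.
exact: (sum_prod_bitk (fun k c => sigma (p k) c c)).
Qed.

End Tensor.

Section Operators.

Variable n : nat.
Implicit Types (A B M N Q U : opn n) (c : algC).

Lemma adj_mul A B : adj (A *m B) = adj B *m adj A.
Proof. by rewrite /adj map_mxM trmx_mul. Qed.

Lemma adj_scale c A : adj (c *: A) = c^* *: adj A.
Proof. by apply/matrixP => i j; rewrite /adj !mxE rmorphM. Qed.

Lemma adj_add A B : adj (A + B) = adj A + adj B.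
Proof. by apply/matrixP => i j; rewrite /adj !mxE rmorphD. Qed.

Lemma adj_one : adj (1%:M : opn n) = 1%:M.
Proof. by rewrite /adj map_scalar_mx rmorph1 tr_scalar_mx. Qed.

Lemma adjK A : adj (adj A) = A.
Proof. by apply/matrixP => i j; rewrite /adj !mxE conjCK. Qed.

Lemma opn1_neq0 : (1%:M : opn n) != 0.
Proof.
have i0 : 'I_(2 ^ n) := Ordinal (expn_gt0 2 n).
by apply/eqP => /matrixP /(_ i0 i0) /eqP; rewrite !mxE eqxx oner_eq0.
Qed.

Lemma unitary_unit U : unitary U -> U \in unitmx.
Proof. by case/mulmx1_unit. Qed.

Lemma unitary_inv U : unitary U -> invmx U = adj U.
Proof.
move=> hU; have hu := unitary_unit hU.
by rewrite -[invmx U]mulmx1 -hU mulmxA mulVmx // mul1mx.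
Qed.

Lemma mulmx_conj U A B : U \in unitmx ->
  (U *m A *m invmx U) *m (U *m B *m invmx U) = U *m (A *m B) *m invmx U.
Proof. by move=> hU; rewrite !mulmxA mulmxKV. Qed.

Lemma is_pauliE M : is_pauli M <->
  exists (k : nat) (p : 'I_n -> pauli1), M = 'i ^+ k *: tensP p.
Proof.
split=> [[k [p ->]]|[k [p ->]]]; first by exists k, p.
exists (Ordinal (ltn_pmod k (isT : (0 < 4)%N))), p.
have expCi4 : ('i : algC) ^+ 4 = 1 by rewrite (exprM _ 2 2) sqrCi expr2 mulrNN mulr1.
by rewrite /= expr_mod.
Qed.

Lemma is_pauli1 : is_pauli (1%:M : opn n).
Proof. by exists ord0, (fun _ => PI); rewrite tensP1 expr0 scale1r. Qed.

Lemma pauliM M N : is_pauli M -> is_pauli N -> is_pauli (M *m N).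
Proof.
case=> a [p ->] [b [q ->]]; apply/is_pauliE.
rewrite -scalemxAl -scalemxAr tensP_mul !scalerA prodrXr -!exprD.
by eexists; eexists.
Qed.

Lemma pauli_commute M N : is_pauli M -> is_pauli N ->
  M *m N = N *m M \/ M *m N = - (N *m M).
Proof.
case=> a [p ->] [b [q ->]].
rewrite -!scalemxAl -!scalemxAr !tensP_mul !scalerA.
have -> : (fun k => pmul (q k) (p k)) = (fun k => pmul (p k) (q k)).
  by apply: functional_extensionality => k; rewrite pmulC.
set s := \prod_(k < n) signb (panti (p k) (q k)).
have -> : \prod_(k < n) 'i ^+ pphase (q k) (p k) =
      s * \prod_(k < n) 'i ^+ pphase (p k) (q k).
  by rewrite -big_split; apply: eq_bigr => k _; rewrite pphaseC.
have [->|->] : s = 1 \/ s = -1.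
- apply: (big_ind (fun x : algC => x = 1 \/ x = -1));
    [by left | | by move=> k _; case: panti; auto].
  by move=> x y [->|->] [->|->]; rewrite ?mulr1 ?mul1r ?mulrNN ?mulr1; auto.
- by left; rewrite mul1r [_ ^+ b * _]mulrC.
- by right; rewrite mulN1r mulrN scaleNr opprK [_ ^+ b * _]mulrC.
Qed.

Lemma pauli_unitary M : is_pauli M -> unitary M.
Proof.
case=> a [p ->]; rewrite /unitary adj_scale tensP_adj
  -scalemxAl -scalemxAr tensP_sq scalerA.
by rewrite -normCK normrX normCi !expr1n scale1r.
Qed.

Lemma pauli_neq0 M : is_pauli M -> M != 0.
Proof.
move=> /pauli_unitary hM; apply/eqP => h0; move: hM.
by rewrite /unitary h0 mul0mx => /esym/eqP; rewrite (negbTE opn1_neq0).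
Qed.

Lemma hpauli_sq M : is_hpauli M -> M *m M = 1%:M.
Proof. by case=> hM hA; rewrite -{2}hA; apply: pauli_unitary. Qed.

Lemma pauli_scalar_of_mxtrace Q : is_pauli Q -> \tr Q != 0 -> exists c, Q = c *: 1%:M.
Proof.
case=> a [p ->]; rewrite mxtraceZ mxtrace_tensP.
have [/existsP [k hk]|/existsPn hall] :=
  boolP [exists k, if p k is PI then false else true].
  rewrite (bigD1 k) //=; move: hk; case: (p k) => //= _;
  by rewrite ?addrN ?addr0 ?add0r ?mul0r ?mulr0 eqxx.
move=> _; exists ('i ^+ a); rewrite -tensP1; congr (_ *: tensP _).
by apply: functional_extensionality => k; move: (hall k); case: (p k).
Qed.

Definition pauli_of (x : 'I_4 * {ffun 'I_n -> 'I_4}) : opn n :=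
  'i ^+ x.1 *: tensP (fun k => nth PI [:: PI; PX; PY; PZ] (x.2 k)).

Lemma pauli_ofP M : is_pauli M <-> M \in codom pauli_of.
Proof.
split=> [[k [p ->]]|/codomP [x ->]]; last first.
  by exists x.1, (fun k => nth PI [:: PI; PX; PY; PZ] (x.2 k)).
pose idx (a : pauli1) : 'I_4 :=
  inord (match a with PI => 0 | PX => 1 | PY => 2 | PZ => 3 end).
apply/codomP; exists (k, [ffun k => idx (p k)]); congr (_ *: tensP _).
by apply: functional_extensionality => i; rewrite ffunE /idx; case: (p i); rewrite inordK.
Qed.

(* Conjugation by [U] maps the finitely many Pauli operators injectively into
   themselves, hence onto them. *)
Lemma clifford_conjV U Q : clifford U -> is_pauli Q -> is_pauli (invmx U *m Q *m U).
Proof.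
case=> /unitary_unit hU hC /pauli_ofP hQ.
pose phi M := U *m M *m invmx U; pose s := undup (codom pauli_of).
have phi_inj : injective phi.
  move=> M N /(congr1 (fun A => invmx U *m A *m U)).
  by rewrite /phi !mulmxA !mulVmx // !mul1mx !mulmxKV.
have hsub : {subset map phi s <= s}.
  move=> A /mapP [M]; rewrite mem_undup => /pauli_ofP hM ->.
  by rewrite mem_undup; apply/pauli_ofP/hC.
have [_ heq] := uniq_min_size (etrans (map_inj_uniq phi_inj s) (undup_uniq _)) hsub
  (eq_leq (esym (size_map phi s))).
have /mapP [P] : Q \in map phi s by rewrite heq mem_undup.
by rewrite mem_undup => /pauli_ofP hP ->; rewrite /phi !mulmxA mulVmx // mul1mx mulmxKV.
Qed.

End Operators.

(** * Stabiliser groups *)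

Section GeneratedGroup.

Variables (n : nat) (L : seq (opn n)).
Implicit Types (g h M T : opn n).

Lemma in_group1 : in_group L 1%:M.
Proof. by exists [::]. Qed.

Lemma in_group_mem T : T \in L -> in_group L T.
Proof. by move=> hT; exists [:: T]; rewrite /= hT mulmx1. Qed.

Lemma in_groupM g h : in_group L g -> in_group L h -> in_group L (g *m h).
Proof.
case=> s [hs ->] [t [ht ->]]; exists (s ++ t); rewrite all_cat hs ht; split=> //.
by elim: s {hs} => [|x s IH] /=; rewrite ?mul1mx // -IH mulmxA.
Qed.

Lemma in_group_sub L' g : {subset L <= L'} -> in_group L g -> in_group L' g.
Proof.
by move=> hsub [s [hs ->]]; exists s; split=> //; apply/allP => x /(allP hs)/hsub.
Qed.

Lemma in_group_ind (P : opn n -> Prop) :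
  P 1%:M -> (forall T h, T \in L -> in_group L h -> P h -> P (T *m h)) ->
  forall g, in_group L g -> P g.
Proof.
move=> P1 PM g [s [hs ->]]; elim: s hs => [|x s IH] //= /andP [hx hs].
by apply: PM (IH hs) => //; exists s.
Qed.

Lemma in_group_commute M g :
  (forall T, T \in L -> T *m M = M *m T) -> in_group L g -> g *m M = M *m g.
Proof.
move=> hM hg; elim/in_group_ind: g / hg => [|T h hT _ IH]; first by rewrite mul1mx mulmx1.
by rewrite -mulmxA IH !mulmxA hM.
Qed.

End GeneratedGroup.

Lemma in_group_conj n (L : seq (opn n)) (U g : opn n) : U \in unitmx -> in_group L g ->
  in_group [seq U *m T *m invmx U | T <- L] (U *m g *m invmx U).
Proof.
move=> hU hg; elim/in_group_ind: g / hg => [|T h hT _ IH].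
  by rewrite mulmx1 mulmxV //; apply: in_group1.
by rewrite -mulmx_conj //; apply: in_groupM IH; apply/in_group_mem/map_f.
Qed.

Record stab_list n (L : seq (opn n)) : Prop := StabList {
  stab_hpauli : forall T, T \in L -> is_hpauli T;
  stab_comm : forall T T', T \in L -> T' \in L -> T *m T' = T' *m T }.

Lemma stab_list_nil n : stab_list ([::] : seq (opn n)).
Proof. by split. Qed.

Section StabiliserGroup.

Variables (n : nat) (L : seq (opn n)).
Hypothesis hL : stab_list L.
Implicit Types g h : opn n.

Lemma stab_group_comm g h : in_group L g -> in_group L h -> g *m h = h *m g.
Proof.
move=> hg hh; symmetry; apply: in_group_commute hh => T hT.
by symmetry; apply: in_group_commute hg => T' hT'; exact: (stab_comm hL).
Qed.

Lemma stab_group_hpauli g : in_group L g -> is_hpauli g.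
Proof.
move=> hg; elim/in_group_ind: g / hg => [|T h hT hh [IHp IHh]].
  by split; [apply: is_pauli1 | apply: adj_one].
have [hpT hhT] := stab_hpauli hL hT; split; first exact: pauliM.
by rewrite /Defs.hermitian adj_mul IHh hhT (stab_group_comm hh (in_group_mem hT)).
Qed.

Lemma stab_group_sq g : in_group L g -> g *m g = 1%:M.
Proof. by move/stab_group_hpauli/hpauli_sq. Qed.

End StabiliserGroup.

(** * Projective measurements *)

Lemma signbK b : signb b * signb b = 1.
Proof. by case: b; rewrite /= ?mulrNN mulr1. Qed.

Lemma conj_signb b : (signb b)^* = signb b.
Proof. by case: b; rewrite /= ?rmorphN rmorph1. Qed.

Lemma signb_addb a b : signb (a (+) b) = signb a * signb b.
Proof. by case: a; case: b; rewrite /= ?mulrNN ?mulr1 ?mul1r. Qed.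

Lemma signb_negb b : signb (~~ b) = - signb b.
Proof. by case: b; rewrite /= ?opprK. Qed.

Lemma scale_half_double n (A : opn n) : 2^-1 *: (A + A) = A.
Proof. by rewrite -mulr2n -scaler_nat scalerA mulVf ?scale1r // pnatr_eq0. Qed.

Section Projector.

Variables (n : nat) (S : opn n).
Implicit Types (Q X Y : opn n) (a b : bool).

Lemma projE b : proj b S = 2^-1 *: (1%:M + signb b *: S).
Proof. by case: b; rewrite /proj /signb ?scaleN1r ?scale1r. Qed.

Lemma proj_herm b : adj S = S -> adj (proj b S) = proj b S.
Proof.
by move=> hS; rewrite projE adj_scale adj_add adj_scale adj_one hS
  conj_signb fmorphV rmorph_nat.
Qed.

Lemma proj_comm b Q : Q *m S = S *m Q -> Q *m proj b S = proj b S *m Q.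
Proof.
move=> hQ; rewrite projE -scalemxAl -scalemxAr mulmxDr mulmxDl mul1mx mulmx1.
by rewrite -scalemxAl -scalemxAr hQ.
Qed.

Lemma proj_anticomm b Q : Q *m S = - (S *m Q) -> proj b S *m Q = Q *m proj (~~ b) S.
Proof.
move=> hQ; rewrite !projE -scalemxAl -scalemxAr mulmxDr mulmxDl mul1mx mulmx1.
by rewrite -scalemxAl -scalemxAr hQ signb_negb scalerN scaleNr opprK.
Qed.

Lemma mxtrace_proj b Y : \tr (proj b S *m Y) = 2^-1 * (\tr Y + signb b * \tr (S *m Y)).
Proof.
by rewrite projE -scalemxAl mxtraceZ mulmxDl mul1mx mxtraceD -scalemxAl mxtraceZ.
Qed.

Lemma proj_eigen a b Y : S *m Y = signb a *: Y -> proj b S *m Y = if b == a then Y else 0.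
Proof.
move=> hY; rewrite projE -scalemxAl mulmxDl mul1mx -scalemxAl hY scalerA.
have [->|/negbTE hab] := eqVneq b a; first by rewrite signbK scale1r scale_half_double.
have -> : signb b * signb a = -1
  by move: hab {hY}; case: a; case: b; rewrite /= ?mulrN ?mulr1 ?mul1r.
by rewrite scaleN1r subrr scaler0.
Qed.

Hypothesis hS : S *m S = 1%:M.

Lemma mulmx_proj b : S *m proj b S = signb b *: proj b S.
Proof.
rewrite projE -scalemxAr mulmxDr mulmx1 -scalemxAr hS scalerA mulrC -scalerA.
by congr (_ *: _); rewrite scalerDr scalerA signbK scale1r scalemx1 addrC.
Qed.

Lemma proj_idem b : proj b S *m proj b S = proj b S.
Proof. by rewrite (proj_eigen _ (mulmx_proj b)) eqxx. Qed.

Lemma proj_orth b : proj (~~ b) S *m proj b S = 0.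
Proof. by rewrite (proj_eigen _ (mulmx_proj b)); case: b. Qed.

Lemma mxtrace_conj_proj_anticomm b Q X : Q *m S = - (S *m Q) ->
  \tr (Q *m (proj b S *m X *m proj b S)) = 0.
Proof.
move=> hQ; rewrite !mulmxA mxtrace_mulC !mulmxA (proj_anticomm _ hQ).
by rewrite -(mulmxA Q) proj_orth mulmx0 !mul0mx mxtrace0.
Qed.

Lemma mxtrace_conj_proj_comm b Q X : Q *m S = S *m Q ->
  \tr (Q *m (proj b S *m X *m proj b S)) =
  2^-1 * (\tr (Q *m X) + signb b * \tr (S *m Q *m X)).
Proof.
move=> hQ; rewrite !mulmxA mxtrace_mulC !mulmxA -(proj_comm _ hQ) -(mulmxA Q) proj_idem.
by rewrite (proj_comm _ hQ) -!mulmxA mxtrace_proj !mulmxA.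
Qed.

End Projector.

Lemma sum_sqr_norm_eq0 (I : finType) (F : I -> algC) :
  \sum_i `|F i| ^+ 2 = 0 -> forall i, F i = 0.
Proof.
move=> h i; have hF j : 0 <= `|F j| ^+ 2 by rewrite exprn_ge0.
have /eqP := psumr_eq0P (fun j _ => hF j) h (i := i) isT.
by rewrite expf_eq0 /= normr_eq0 => /eqP.
Qed.

Definition dens n (A : opn n) : opn n := A *m adj A.

Section Density.

Variable n : nat.
Implicit Types (A M T Y : opn n) (c : algC).

Lemma dens_herm A : adj (dens A) = dens A.
Proof. by rewrite /dens adj_mul adjK. Qed.

Lemma densM M A : dens (M *m A) = M *m dens A *m adj M.
Proof. by rewrite /dens adj_mul !mulmxA. Qed.

Lemma dens_eq0 A : dens A = 0 -> A = 0.
Proof.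
move=> /matrixP h; apply/matrixP => i l; rewrite mxE; move/(_ i i): h; rewrite !mxE => h.
apply: (sum_sqr_norm_eq0 (F := A i)); rewrite -[RHS]h.
by apply: eq_bigr => j _; rewrite /adj !mxE normCK.
Qed.

Lemma herm_eigen_r T Y c : adj T = T -> adj Y = Y -> c^* = c ->
  T *m Y = c *: Y -> Y *m T = c *: Y.
Proof. by move=> hT hY hc hTY; rewrite -[Y *m T]adjK adj_mul hT hY hTY adj_scale hY hc. Qed.

End Density.

(** * The tracking invariant *)

Definition lin_sign (f : (nat -> bool) -> bool) : Prop :=
  forall o o', f (fun j => o j (+) o' j) = f o (+) f o'.

Definition lin_set (G : (nat -> bool) -> Prop) : Prop :=
  G (fun _ => false) /\ forall o o', G o -> G o' -> G (fun j => o j (+) o' j).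

Lemma lin_sign0 f : lin_sign f -> f (fun _ => false) = false.
Proof. by move=> lf; have := lf (fun _ => false) (fun _ => false); rewrite /= addbb. Qed.

Definition prop_in_group n (L : seq (opn n)) (Q : opn n) : Prop :=
  exists c g, in_group L g /\ Q = c *: g.

(* [K o] is the Kraus operator of the outcome string [o] for the part of the
   circuit processed so far; [dens (K o)] is the resulting unnormalised state
   for the maximally mixed input. *)
Record tracks n (L : seq (opn n)) (K : (nat -> bool) -> opn n)
    (G : (nat -> bool) -> Prop) : Prop := Tracks {
  tracks_lin : lin_set G;
  tracks_supp : forall o, ~ G o -> K o = 0;
  tracks_eigen : forall T, T \in L -> exists2 f, lin_sign f &
    forall o, G o -> T *m dens (K o) = signb (f o) *: dens (K o);
  tracks_tr : forall o, G o -> \tr (dens (K o)) != 0;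
  tracks_tr_out : forall o Q, G o -> is_pauli Q -> ~ prop_in_group L Q ->
    \tr (Q *m dens (K o)) = 0 }.

Section Tracking.

Variable n : nat.
Implicit Types (L : seq (opn n)) (K : (nat -> bool) -> opn n) (G : (nat -> bool) -> Prop).
Implicit Types (g h Q S T U : opn n).

Lemma tracks_group_eigen L K G g : tracks L K G -> in_group L g ->
  exists2 f, lin_sign f & forall o, G o -> g *m dens (K o) = signb (f o) *: dens (K o).
Proof.
move=> hK hg; elim/in_group_ind: g / hg => [|T h hT _ [fh lh hh]].
  by exists (fun _ => false) => [o o'|o _]; rewrite ?mul1mx ?scale1r.
have [fT lT hT'] := tracks_eigen hK hT.
exists (fun o => fT o (+) fh o) => [o o'|o Go]; first by rewrite lT lh addbACA.
by rewrite -mulmxA hh // -scalemxAr hT' // scalerA signb_addb mulrC.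
Qed.

Lemma stab_list_conj L U : clifford U -> stab_list L ->
  stab_list [seq U *m T *m invmx U | T <- L].
Proof.
case=> hU hC hL; have hu := unitary_unit hU.
split=> [_ /mapP [T hT ->]|_ _ /mapP [T hT ->] /mapP [T' hT' ->]].
  have [hp hh] := stab_hpauli hL hT; split; first exact: hC.
  by rewrite /Defs.hermitian !adj_mul (unitary_inv hU) adjK hh mulmxA.
by rewrite !mulmx_conj // (stab_comm hL hT hT').
Qed.

Lemma tracks_gate L K G U : clifford U -> tracks L K G ->
  tracks [seq U *m T *m invmx U | T <- L] (fun o => U *m K o) G.
Proof.
move=> hC hK; have [hU _] := hC; have hu := unitary_unit hU.
have densU o : dens (U *m K o) = U *m dens (K o) *m invmx U by rewrite densM unitary_inv.
split=> [|o /(tracks_supp hK) ->|_ /mapP [T hT ->]|o /(tracks_tr hK) hX|o Q Go hQ hnQ].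
- exact: tracks_lin hK.
- by rewrite mulmx0.
- have [f lf hf] := tracks_eigen hK hT; exists f => // o Go.
  by rewrite densU mulmx_conj // hf // -scalemxAr -scalemxAl.
- by rewrite densU mxtrace_mulC mulmxA mulVmx // mul1mx.
rewrite densU mulmxA mxtrace_mulC 2!mulmxA.
apply: (tracks_tr_out hK); rewrite // mulmxA; first exact: clifford_conjV.
move=> [c [g [hg hQg]]]; apply: hnQ; exists c, (U *m g *m invmx U).
split; first exact: in_group_conj.
by rewrite scalemxAl scalemxAr -hQg !mulmxA mulmxV // mul1mx mulmxK.
Qed.

Lemma tracks_meas_in_group L K G S j : stab_list L -> in_group L S -> tracks L K G ->
  exists G', tracks L (fun o => proj (o j) S *m K o) G'.
Proof.
move=> hL hS hK; have [_ hSh] := stab_group_hpauli hL hS.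
have [f lf hf] := tracks_group_eigen hK hS.
have densP o : G o ->
    dens (proj (o j) S *m K o) = if o j == f o then dens (K o) else 0.
  move=> Go; rewrite densM (proj_herm _ hSh) (proj_eigen _ (hf o Go)).
  case: eqP => [e|_]; last by rewrite !mul0mx.
  have PX : proj (o j) S *m dens (K o) = 1 *: dens (K o).
    by rewrite scale1r (proj_eigen _ (hf o Go)) e eqxx.
  by rewrite (herm_eigen_r (proj_herm _ hSh) (dens_herm _) (conjC1 _) PX) scale1r.
have [G0 GD] := tracks_lin hK.
exists (fun o => G o /\ o j = f o); split.
- split=> [|o o' [Go e] [Go' e']]; first by rewrite lin_sign0.
  by split; [apply: GD | rewrite lf e e'].
- move=> o hGo; have [Go|nGo] := classic (G o); last by rewrite (tracks_supp hK) ?mulmx0.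
  by apply: dens_eq0; rewrite densP //; case: eqP => // e; case: hGo.
- move=> T hT; have [fT lT hT'] := tracks_eigen hK hT.
  by exists fT => // o [Go e]; rewrite densP // e eqxx; apply: hT'.
- by move=> o [Go e]; rewrite densP // e eqxx; apply: (tracks_tr hK Go).
- by move=> o Q [Go e]; rewrite densP // e eqxx; apply: (tracks_tr_out hK Go).
Qed.

End Tracking.

(* Requirements on the generator list [L'] replacing [L] after a case (b)
   measurement of [S]. *)
Definition stab_update n (L : seq (opn n)) (S : opn n) (L' : seq (opn n)) : Prop :=
  [/\ S \in L',
      forall Y, Y \in L' -> Y = S \/ in_group L Y /\ Y *m S = S *m Y &
      forall g, in_group L g -> g *m S = S *m g -> in_group L' g].

Section StabiliserUpdate.

Variable n : nat.
Implicit Types (L : seq (opn n)) (K : (nat -> bool) -> opn n) (G : (nat -> bool) -> Prop).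
Implicit Types (g h M Q S T : opn n).

Lemma not_prop_in_group L S : stab_list L -> is_hpauli S ->
  ~ in_group L S -> ~ in_group L (- S) -> ~ prop_in_group L S.
Proof.
move=> hL hS hS1 hS2 [c [g [hg e]]].
have := hpauli_sq hS; rewrite e -scalemxAl -scalemxAr (stab_group_sq hL hg) scalerA -expr2.
move/eqP; rewrite -subr_eq0 -{2}(scale1r 1%:M) -scalerBl scaler_eq0
  (negbTE (opn1_neq0 n)) orbF.
rewrite subr_eq0 sqrf_eq1 => /orP [] /eqP c1.
- by apply: hS1; rewrite e c1 scale1r.
- by apply: hS2; rewrite e c1 scaleN1r opprK.
Qed.

Lemma prop_in_group_commute L L' S Q : is_pauli Q -> Q *m S = S *m Q ->
  (forall g, in_group L g -> g *m S = S *m g -> in_group L' g) ->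
  prop_in_group L Q -> prop_in_group L' Q.
Proof.
move=> hQ hQS hL' [c [g [hg hQg]]]; exists c, g; split=> //; apply: hL' => //.
have c0 : c != 0.
  by apply/eqP => c0; move: (pauli_neq0 hQ); rewrite hQg c0 scale0r eqxx.
by apply: (scalerI c0); rewrite scalemxAl scalemxAr -hQg.
Qed.

Lemma prop_in_group_mulKl L S Q : in_group L S -> S *m S = 1%:M ->
  prop_in_group L (S *m Q) -> prop_in_group L Q.
Proof.
move=> hS hSS [c [g [hg e]]]; exists c, (S *m g); split; first exact: in_groupM.
by rewrite scalemxAr -e mulmxA hSS mul1mx.
Qed.

Lemma stab_list_update L L' S : stab_list L -> is_hpauli S -> stab_update L S L' ->
  stab_list L'.
Proof.
move=> hL hS [_ hL' _].
split=> [Y /hL' [->|[hY _]] //|Y Y' /hL' [->|[hY hYS]] /hL' [->|[hY' hY'S]]] //.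
- exact: (stab_group_hpauli hL hY).
- exact: (stab_group_comm hL hY hY').
Qed.

(* Both outcomes survive: [S] is traceless against the state, so each projection
   keeps half of its trace.  A Pauli [Q] outside the new group either
   anticommutes with [S], or [Q] and [S Q] both lie outside the old group. *)
Lemma tracks_meas_update L L' K G S j : stab_list L -> is_hpauli S ->
  ~ prop_in_group L S -> stab_update L S L' ->
  tracks L K G -> tracks L' (fun o => proj (o j) S *m K o) G.
Proof.
move=> hL hS hnS [hSL' hL' hsubL'] hK; have hSS := hpauli_sq hS; have [hSp hSh] := hS.
have densP o : dens (proj (o j) S *m K o) = proj (o j) S *m dens (K o) *m proj (o j) S.
  by rewrite densM proj_herm.
split=> [|o /(tracks_supp hK) ->|Y /hL' [->|[hY hYS]]|o Go|o Q Go hQ hnQ].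
- exact: tracks_lin hK.
- by rewrite mulmx0.
- exists (fun o => o j) => // o _.
  by rewrite densP 2!mulmxA mulmx_proj // -!scalemxAl.
- have [f lf hf] := tracks_group_eigen hK hY; exists f => // o Go.
  rewrite densP 2!mulmxA (proj_comm _ hYS) -(mulmxA _ Y) (hf o Go).
  by move: (proj _ S) (dens _) => P X; rewrite -scalemxAr -scalemxAl.
- have hSX : \tr (S *m dens (K o)) = 0 := tracks_tr_out hK Go hSp hnS.
  rewrite densP -[X in \tr X]mul1mx mxtrace_conj_proj_comm ?mul1mx ?mulmx1 // hSX.
  by rewrite mulr0 addr0 mulf_neq0 ?invr_eq0 ?pnatr_eq0 // (tracks_tr hK Go).
rewrite densP; have [hQS|hQS] := pauli_commute hQ hSp; last first.
  exact: mxtrace_conj_proj_anticomm.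
have nQ : ~ prop_in_group L Q := fun hp => hnQ (prop_in_group_commute hQ hQS hsubL' hp).
have nSQ : ~ prop_in_group L (S *m Q).
  move=> /(prop_in_group_commute (pauliM hSp hQ) _ hsubL') hSQ; apply: hnQ.
  apply: (prop_in_group_mulKl (in_group_mem hSL') hSS); apply: hSQ.
  by rewrite -mulmxA hQS.
rewrite mxtrace_conj_proj_comm // !(tracks_tr_out hK Go) ?mulr0 ?addr0 ?mulr0 //.
exact: pauliM.
Qed.

Lemma in_group_pivot L L0 T : T *m T = 1%:M ->
  (forall x, x \in L -> x *m T = T *m x) ->
  (forall x, x \in L -> [\/ x = T, x \in L0 | T *m x \in L0]) ->
  forall g, in_group L g -> exists2 h, in_group L0 h & g = h \/ g = T *m h.
Proof.
move=> hTT hLT hL g hg; elim/in_group_ind: g / hg => [|x g hx _ [h hh eg]].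
  by exists 1%:M; [apply: in_group1 | left].
have mem0 y : y \in L0 -> in_group L0 (y *m h).
  by move=> hy; apply: in_groupM hh; apply: in_group_mem.
case: (hL x hx) => [->|/mem0 hxh|/mem0 hTxh].
- exists h => //; case: eg => ->; [right | left] => //.
  by rewrite mulmxA hTT mul1mx.
- exists (x *m h) => //; case: eg => ->; [left | right] => //.
  by rewrite !mulmxA hLT.
- exists (T *m x *m h) => //; case: eg => ->; [right | left].
  + by rewrite !mulmxA hTT mul1mx.
  + by rewrite !mulmxA hLT.
Qed.

Lemma comm_anticomm_eq0 M S : S *m S = 1%:M ->
  M *m S = S *m M -> M *m S = - (S *m M) -> M = 0.
Proof.
move=> hSS hc ha; have hSM : S *m M = 0.
  by rewrite -(scale_half_double (S *m M)) {2}(esym hc) ha subrr scaler0.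
by rewrite -[M]mul1mx -hSS -mulmxA hSM mulmx0.
Qed.

Lemma pauli_comm_of_not_anticomm T S : is_pauli T -> is_pauli S -> ~~ anticomm T S ->
  T *m S = S *m T.
Proof.
by move=> hT hS; case: (pauli_commute hT hS) => // ha; rewrite /anticomm ha eqxx.
Qed.

Lemma stab_update_rcons L S : is_pauli S -> stab_list L ->
  (forall T, T \in L -> ~~ anticomm T S) -> stab_update L S (rcons L S).
Proof.
move=> hSp hL hna; split=> [|Y|g hg _]; first by rewrite mem_rcons mem_head.
  rewrite mem_rcons in_cons => /predU1P [->|hY]; [by left | right].
  have [hYp _] := stab_hpauli hL hY.
  by split; [apply: in_group_mem | apply: pauli_comm_of_not_anticomm (hna Y hY)].
by apply: in_group_sub hg => x hx; rewrite mem_rcons in_cons hx orbT.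
Qed.

(* [T] is the generator removed in case (b); the elements of [R] are the other
   generators, those anticommuting with [S] get multiplied by [T]. *)
Lemma stab_update_pivot L S T R : stab_list L -> is_hpauli S ->
  T \in L -> T *m S = - (S *m T) -> {subset R <= L} ->
  (forall x, x \in L -> x = T \/ x \in R) ->
  stab_update L S ([seq if anticomm x S then T *m x else x | x <- R] ++ [:: S]).
Proof.
move=> hL hS hT hTS hRL hLR; have [hSp _] := hS.
have hTT : T *m T = 1%:M := hpauli_sq (stab_hpauli hL hT).
set L0 := [seq _ | _ <- R].
have hL0 y : y \in L0 -> in_group L y /\ y *m S = S *m y.
  case/mapP => x /hRL hx ->; have [hxp _] := stab_hpauli hL hx.
  case: ifPn => ha; last first.
    by split; [apply: in_group_mem | apply: pauli_comm_of_not_anticomm].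
  split; first by apply: in_groupM; apply: in_group_mem.
  have /eqP hxS := ha.
  by rewrite -mulmxA hxS mulmxN [T *m (S *m x)]mulmxA hTS mulNmx opprK mulmxA.
have hpiv x : x \in L -> [\/ x = T, x \in L0 | T *m x \in L0].
  case/hLR => [->|hxR]; first by constructor 1.
  have [ha|ha] := boolP (anticomm x S); [constructor 3 | constructor 2];
    by apply/mapP; exists x; rewrite ?ha ?(negbTE ha).
split=> [|Y|g hg hgS]; first by rewrite mem_cat mem_seq1 eqxx orbT.
  by rewrite mem_cat mem_seq1 => /orP [/hL0|/eqP ->]; [right | left].
apply: (@in_group_sub _ L0) => [x hx|]; first by rewrite mem_cat hx.
have [h hh [-> //|eg]] := in_group_pivot hTT (fun x hx => stab_comm hL hx hT) hpiv hg.
have hhS : h *m S = S *m h := in_group_commute (fun y hy => proj2 (hL0 y hy)) hh.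
have hga : g *m S = - (S *m g) by rewrite eg -mulmxA hhS mulmxA hTS mulNmx !mulmxA.
have := stab_group_sq hL hg; rewrite (comm_anticomm_eq0 (hpauli_sq hS) hgS hga) mul0mx.
by move/esym/eqP; rewrite (negbTE (opn1_neq0 n)).
Qed.

Lemma stab_update_b L S : stab_list L -> is_hpauli S -> stab_update L S (update_b L S).
Proof.
move=> hL hS; rewrite /update_b; set i := find _ L; case: ifPn => hi; last first.
  apply: stab_update_rcons hS.1 hL _ => T hT.
  by move: hi; rewrite -has_find => /hasPn; apply.
have hhas : has (fun T => anticomm T S) L by rewrite has_find.
apply: stab_update_pivot hL hS (mem_nth 0 hi) (eqP (nth_find 0 hhas)) _ _.
  by move=> x; rewrite mem_cat => /orP [/mem_take|/mem_drop].
move=> x; rewrite -{1}(cat_take_drop i L) (drop_nth 0 hi) mem_cat in_cons.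
by case/or3P => [h|/eqP ->|h]; [right | left | right]; rewrite // mem_cat h ?orbT.
Qed.

End StabiliserUpdate.

Lemma tracks_meas_update_b n (L : seq (opn n)) K G S j :
  stab_list L -> is_hpauli S -> ~ in_group L S -> ~ in_group L (- S) -> tracks L K G ->
  stab_list (update_b L S) /\ tracks (update_b L S) (fun o => proj (o j) S *m K o) G.
Proof.
move=> hL hS hS1 hS2 hK; have hU := stab_update_b hL hS; split.
  exact: stab_list_update hL hS hU.
exact: tracks_meas_update hL hS (not_prop_in_group hL hS hS1 hS2) hU hK.
Qed.

(** * Circuits and the outcome code *)

Fixpoint kraus n (C : circuit n) (j : nat) (o : nat -> bool) : opn n :=
  match C with
  | [::] => 1%:M
  | Gate U :: C' => kraus C' j o *m U
  | Meas Sm :: C' => kraus C' j.+1 o *m proj (o j) Sm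
  end.

Lemma run_kraus n (C : circuit n) j o psi : run C j o psi = kraus C j o *m psi.
Proof.
elim: C j psi => [|[U|Sm] C IH] j psi /=; first by rewrite mul1mx.
  by rewrite IH mulmxA.
by rewrite IH mulmxA.
Qed.

Lemma decPE (P : Prop) : Defs.decP P <-> P.
Proof. by rewrite /Defs.decP; case: ClassicalEpsilon.excluded_middle_informative. Qed.

Lemma decP_false (P : Prop) : ~ P -> Defs.decP P = false.
Proof. by move=> hP; apply/negbTE/negP => /decPE. Qed.

Lemma tracks_init n : tracks ([::] : seq (opn n)) (fun _ => 1%:M) (fun _ => True).
Proof.
split=> // [o _|o Q _ hQ hnQ].
  by rewrite /dens adj_one mulmx1 mxtrace1 pnatr_eq0 expn_eq0.
rewrite /dens adj_one !mulmx1; apply/eqP/contraT => /(pauli_scalar_of_mxtrace hQ) [c hc].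
by exfalso; apply: hnQ; exists c, 1%:M; split; [apply: in_group1 | rewrite hc].
Qed.

Lemma tracks_kraus_neq0 n (L : seq (opn n)) K G o : tracks L K G -> K o != 0 <-> G o.
Proof.
move=> hK; split=> [hKo|Go]; first by apply: NNPP => /(tracks_supp hK) /eqP; apply/negP.
by apply: contraNneq (tracks_tr hK Go) => ->; rewrite /dens mul0mx mxtrace0.
Qed.

Lemma flipped_kraus_support n (C : circuit n) : valid_circuit C ->
  forall L j K G, stab_list L -> tracks L K G ->
  exists2 G', lin_set G' &
    forall o, kraus (flip_meas (oca_flags L C) C) j o *m K o != 0 <-> G' o.
Proof.
elim: C => [|c C IH] /= hv L j K G hL hK.
  by exists G => [|o]; rewrite ?mul1mx;
     [apply: (tracks_lin hK) | apply: (tracks_kraus_neq0 _ hK)].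
case: hv; case: c => [U|S] /= hv hC.
  have [G' lG' hG'] := IH hC _ j _ _ (stab_list_conj hv hL) (tracks_gate hv hK).
  by exists G' => // o; rewrite -mulmxA.
have [hSL|hSL] := classic (in_group L S \/ in_group L (- S)).
  have hS' : in_group L (if Defs.decP (in_group L (- S)) then - S else S).
    have [hN|hN] := classic (in_group L (- S)); first by rewrite (proj2 (decPE _) hN).
    by rewrite decP_false //; case: hSL.
  have [G1 hK1] := tracks_meas_in_group j hL hS' hK.
  have [G' lG' hG'] := IH hC L j.+1 _ _ hL hK1.
  by exists G' => // o; rewrite (proj2 (decPE _) hSL) -mulmxA.
have [hL' hK'] := tracks_meas_update_b j hL hv (fun h => hSL (or_introl h))
  (fun h => hSL (or_intror h)) hK.
have [G' lG' hG'] := IH hC _ j.+1 _ _ hL' hK'.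
by exists G' => // o; rewrite decP_false //= -mulmxA.
Qed.

Lemma F2_cases (c : 'F_2) : c = 0 \/ c = 1.
Proof. by case: c => [[|[|k]] // hc]; [left | right]; apply: val_inj. Qed.

Lemma vspace_of_addr_closed m (P : 'rV['F_2]_m -> Prop) :
  P 0 -> (forall x y, P x -> P y -> P (x + y)) ->
  exists U : {vspace 'rV['F_2]_m}, forall o, o \in U <-> P o.
Proof.
move=> P0 PD; set X := in_tuple (enum [pred o | Defs.decP (P o)]).
have PX x : x \in X -> P x by rewrite mem_enum inE => /decPE.
exists <<X>>%VS => o; split=> [/coord_span ->|Po].
  apply: (big_ind P) => // i _; have [->|->] := F2_cases (coord X i o).
  - by rewrite scale0r.
  - by rewrite scale1r; apply/PX/mem_nth/ltn_ord.
by apply: memv_span; rewrite mem_enum inE; apply/decPE.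
Qed.

Lemma outcome_fun0 m : outcome_fun (0 : 'rV['F_2]_m) = fun _ => false.
Proof.
apply: functional_extensionality => j; rewrite /outcome_fun.
by case: ltnP => // h; rewrite mxE.
Qed.

Lemma outcome_funD m (a b : 'rV['F_2]_m) :
  outcome_fun (a + b) = fun j => outcome_fun a j (+) outcome_fun b j.
Proof.
apply: functional_extensionality => j; rewrite /outcome_fun; case: ltnP => // h.
by rewrite mxE; case: (F2_cases (a 0 (Ordinal h))) => ->;
  case: (F2_cases (b 0 (Ordinal h))) => ->.
Qed.

Lemma sqnorm0 N : sqnorm (0 : 'cV[algC]_N) = 0.
Proof. by rewrite /sqnorm big1 // => i _; rewrite mxE normr0 expr0n. Qed.

Lemma exists_sqnorm1_mul_neq0 N (K : 'M[algC]_N) : K != 0 ->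
  exists2 psi : 'cV[algC]_N, sqnorm psi = 1 & sqnorm (K *m psi) != 0.
Proof.
case/matrix0Pn => i [j hKij]; exists (delta_mx j 0).
  rewrite /sqnorm (bigD1 j) //= mxE !eqxx normr1 expr1n big1 ?addr0 // => l hl.
  by rewrite mxE (negbTE hl) normr0 expr0n.
by rewrite -colE; apply: contra hKij => /eqP /sum_sqr_norm_eq0 /(_ i); rewrite mxE => ->.
Qed.

Lemma outcome_codeE n (C : circuit n) o :
  outcome_code C o <-> kraus C 0 (outcome_fun o) != 0.
Proof.
rewrite /outcome_code decPE /prob.
split=> [[psi [_]]|/exists_sqnorm1_mul_neq0 [psi n1 hK]].
  by rewrite run_kraus; apply: contraNneq => ->; rewrite mul0mx sqnorm0.
by exists psi; rewrite run_kraus.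
Qed.

Theorem mainTheorem2 (n : nat) (C : circuit n) :
  valid_circuit C ->
  exists U : {vspace 'rV['F_2]_(num_meas (flipped_circuit C))},
    forall o : 'rV['F_2]_(num_meas (flipped_circuit C)),
      (o \in U) <-> outcome_code (flipped_circuit C) o.
Proof.
move=> hv.
have [G [G0 GD] hG] := flipped_kraus_support hv 0 (stab_list_nil n) (tracks_init n).
have [U hU] : exists U : {vspace 'rV['F_2]_(num_meas (flipped_circuit C))},
    forall o, o \in U <-> G (outcome_fun o).
  apply: vspace_of_addr_closed => [|x y Gx Gy]; first by rewrite outcome_fun0.
  by rewrite outcome_funD; apply: GD.
exists U => o; apply: iff_trans (hU o) _; apply: iff_trans (iff_sym (hG _)) _.
rewrite mulmx1; apply: iff_sym; apply: outcome_codeE.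
Qed.
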